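(* Let $\varphi\in L^\infty(\mathbb{R})\cap S_0(\mathbb{R})$. Then for every $t>0$, $$\|\varphi\|_\infty\le\varphi^*(t)+2\,\omega(\varphi;t),\qquad\text{where }\ \omega(\varphi;t)=\sup_{0\le h\le t}\|\Delta_h\varphi\|_\infty.$$
   Context: $\|\cdot\|_\infty$ is the essential supremum norm on $\mathbb{R}$, and $\Delta_h\varphi(x)=\varphi(x+h)-\varphi(x)$. $S_0(\mathbb{R})$ is the class of measurable, a.e. finite functions $\varphi$ on $\mathbb{R}$ with $|\{x:|\varphi(x)|>s\}|<\infty$ for every $s>0$; $\varphi^*$ is the non-increasing rearrangement of $\varphi$ (the non-negative non-increasing function on $(0,\infty)$ equimeasurable with $|\varphi|$). *)

From Stdlib Require Import Reals Lra ClassicalEpsilon.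
Open Scope R_scope.

(* Supremum / infimum of a set of reals (0 when the set is empty or
   unbounded in the relevant direction). *)
Definition Rsup (E : R -> Prop) : R :=
  match excluded_middle_informative (bound E /\ exists x, E x) with
  | left H => proj1_sig (completeness E (proj1 H) (proj2 H))
  | right _ => 0
  end.

Definition Rinf (E : R -> Prop) : R := - Rsup (fun x => E (- x)).

(* Lebesgue outer measure of A is <= m: for every eps > 0, A is covered by
   countably many open intervals (a n, b n) of total length <= m + eps. *)
Definition outer_le (A : R -> Prop) (m : R) : Prop :=
  forall eps, 0 < eps ->
    exists a b : nat -> R,
      (forall n, a n <= b n) /\
      (forall x, A x -> exists n, a n < x < b n) /\
      (forall N, sum_f_R0 (fun n => b n - a n) N <= m + eps).

Definition null_set (A : R -> Prop) : Prop := outer_le A 0.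

Definition leb_measurable_set (E : R -> Prop) : Prop :=
  forall (A : R -> Prop) (t : R), outer_le A t ->
    exists t1 t2, t1 + t2 <= t /\
      outer_le (fun x => A x /\ E x) t1 /\
      outer_le (fun x => A x /\ ~ E x) t2.

Definition leb_measurable (f : R -> R) : Prop :=
  forall c, leb_measurable_set (fun x => c < f x).

Definition Linfty (f : R -> R) : Prop :=
  leb_measurable f /\ exists M, null_set (fun x => M < Rabs (f x)).

(* f in S_0(R): measurable, and |{|f| > s}| < infty for all s > 0
   (a.e. finiteness is automatic for real-valued f). *)
Definition S0 (f : R -> R) : Prop :=
  leb_measurable f /\
  forall s, 0 < s -> exists m, outer_le (fun x => s < Rabs (f x)) m.

Definition ess_norm (f : R -> R) : R :=
  Rinf (fun M => 0 <= M /\ null_set (fun x => M < Rabs (f x))).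

Definition rearr (f : R -> R) (t : R) : R :=
  Rinf (fun s => 0 <= s /\ outer_le (fun x => s < Rabs (f x)) t).

Definition Delta (h : R) (f : R -> R) : R -> R := fun x => f (x + h) - f x.

Definition omega (f : R -> R) (t : R) : R :=
  Rsup (fun v => exists h, 0 <= h <= t /\ v = ess_norm (Delta h f)).

From Stdlib Require Import Reals Lra Lia Classical ClassicalEpsilon Cantor.
From Coquelicot Require Import Rcomplements.
Open Scope R_scope.

(* Let [N] be the essential norm and suppose [N > phi*(t) + 2 omega(phi; t)].
   For [s] slightly above [phi*(t)] the set [A = {|phi| > s}] has measure at
   most [t], while [E = {|phi| > N - eps}] is not null.  Every increment of step
   at most [t] is a.e. below [omega + eps], so going through the midpoint, the
   translate [E + h] lies in [A] up to a null set for every [h] in [[0, 2t]].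
   But [E] fills more than half of some interval of length [l]; its translates
   by [0, l, ..., floor(2t/l) l] give more than [2t/l] disjoint intervals each
   more than half filled by [A], so [A] has measure more than [t]. *)

Fixpoint psum (f : nat -> R) (n : nat) : R :=
  match n with O => 0 | S n' => psum f n' + f n' end.

Lemma sum_f_R0_psum f N : sum_f_R0 f N = psum f (S N).
Proof. induction N as [|N IH]; simpl in *; [ring | rewrite IH; ring]. Qed.

Lemma psum_ext f g n : (forall i, (i < n)%nat -> f i = g i) -> psum f n = psum g n.
Proof.
  induction n as [|n IH]; intros Hfg; simpl; [reflexivity|].
  rewrite IH, Hfg; [reflexivity | lia | intros; apply Hfg; lia].
Qed.

Lemma psum_le f g n : (forall i, (i < n)%nat -> f i <= g i) -> psum f n <= psum g n.
Proof.
  induction n as [|n IH]; intros Hfg; simpl; [lra|].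
  apply Rplus_le_compat; [apply IH; intros; apply Hfg | apply Hfg]; lia.
Qed.

Lemma psum_le_len f n m : (forall i, 0 <= f i) -> (n <= m)%nat -> psum f n <= psum f m.
Proof. intros Hf Hnm; induction Hnm as [|m _ IH]; simpl; [lra|]. specialize (Hf m); lra. Qed.

Lemma psum_add f g n : psum (fun i => f i + g i) n = psum f n + psum g n.
Proof. induction n as [|n IH]; simpl; [ring | rewrite IH; ring]. Qed.

Lemma psum_scal k f n : psum (fun i => k * f i) n = k * psum f n.
Proof. induction n as [|n IH]; simpl; [ring | rewrite IH; ring]. Qed.

Lemma psum_const c n : psum (fun _ => c) n = INR n * c.
Proof. induction n as [|n IH]; simpl psum; [simpl; ring | rewrite IH, S_INR; ring]. Qed.

Lemma psum_add_len f m n : psum f (m + n) = psum f m + psum (fun i => f (m + i)%nat) n.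
Proof.
  induction n as [|n IH]; simpl; [rewrite Nat.add_0_r; ring|].
  rewrite Nat.add_succ_r; simpl; rewrite IH; ring.
Qed.

Lemma psum_swap (f : nat -> nat -> R) K N :
  psum (fun k => psum (f k) N) K = psum (fun n => psum (fun k => f k n) K) N.
Proof.
  induction K as [|K IH]; simpl.
  - induction N as [|N IHN]; simpl; [ring | rewrite <- IHN; ring].
  - rewrite IH, <- psum_add; reflexivity.
Qed.

Lemma psum_geom J : psum (fun n => / 2 ^ S n) J = 1 - / 2 ^ J.
Proof.
  induction J as [|J IH]; cbn [psum]; [simpl; field|].
  rewrite IH; simpl; field; apply pow_nonzero; lra.
Qed.

Lemma of_nat_diag d k : (k <= d)%nat -> of_nat (to_nat (d, O) + k) = (d - k, k)%nat.
Proof.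
  intros Hk; rewrite <- (cancel_of_to (d - k, k)%nat); f_equal; cbn.
  replace (k + (d - k))%nat with d by lia; lia.
Qed.

(* Summing along the Cantor enumeration up to the [J]-th diagonal: the [n]-th
   row contributes its first [J - n] terms. *)
Lemma psum_of_nat (f : nat -> nat -> R) J :
  psum (fun i => f (snd (of_nat i)) (fst (of_nat i))) (to_nat (J, O))
  = psum (fun n => psum (f n) (J - n)) J.
Proof.
  induction J as [|J IH]; [reflexivity|].
  replace (to_nat (S J, O)) with (to_nat (J, O) + S J)%nat by (cbn; lia).
  rewrite psum_add_len, IH; cbv beta.
  rewrite (psum_ext (fun i => f (snd (of_nat (to_nat (J, O) + i))) (fst (of_nat (to_nat (J, O) + i))))
    (fun n => f n (J - n)%nat)) by (intros n Hn; rewrite of_nat_diag by lia; reflexivity).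
  rewrite (psum_ext (fun n => psum (f n) (S J - n)) (fun n => psum (f n) (J - n) + f n (J - n)%nat) (S J)).
  - rewrite psum_add; cbn [psum]; rewrite Nat.sub_diag; simpl; ring.
  - intros n Hn; rewrite (Nat.sub_succ_l n J) by lia; reflexivity.
Qed.

Lemma outer_le_psum A m : outer_le A m <->
  forall eps, 0 < eps -> exists a b : nat -> R,
    (forall n, a n <= b n) /\ (forall x, A x -> exists n, a n < x < b n) /\
    (forall N, psum (fun n => b n - a n) N <= m + eps).
Proof.
  split; intros HA eps Heps; destruct (HA eps Heps) as [a [b [Hab [Hcov Hsum]]]];
    exists a, b; repeat split; auto; intros N.
  - destruct N as [|N]; [|rewrite <- sum_f_R0_psum; apply Hsum].
    specialize (Hsum O); specialize (Hab O); simpl in *; lra.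
  - rewrite sum_f_R0_psum; apply Hsum.
Qed.

Lemma outer_le_subset (A B : R -> Prop) m :
  (forall x, A x -> B x) -> outer_le B m -> outer_le A m.
Proof.
  intros HAB HB eps Heps; destruct (HB eps Heps) as [a [b [Hab [Hcov Hsum]]]].
  exists a, b; repeat split; auto.
Qed.

Lemma outer_le_weaken A m m' : m <= m' -> outer_le A m -> outer_le A m'.
Proof.
  intros Hm HA eps Heps; destruct (HA eps Heps) as [a [b [Hab [Hcov Hsum]]]].
  exists a, b; repeat split; auto; intros N; specialize (Hsum N); lra.
Qed.

Lemma outer_le_ge0 A m : outer_le A m -> 0 <= m.
Proof.
  intros HA; apply Rle_plus_epsilon; intros eps Heps.
  destruct (proj1 (outer_le_psum A m) HA eps Heps) as [a [b [_ [_ Hsum]]]].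
  specialize (Hsum O); simpl in Hsum; lra.
Qed.

Lemma outer_le_of_forall_gt A m : (forall e, 0 < e -> outer_le A (m + e)) -> outer_le A m.
Proof.
  intros HA eps Heps; destruct (HA (eps / 2) ltac:(lra) (eps / 2) ltac:(lra))
    as [a [b [Hab [Hcov Hsum]]]].
  exists a, b; repeat split; auto; intros N; specialize (Hsum N); lra.
Qed.

Lemma null_set_empty (A : R -> Prop) : (forall x, ~ A x) -> null_set A.
Proof.
  intros HA; apply outer_le_psum; intros eps Heps; exists (fun _ => 0), (fun _ => 0).
  split; [intros; lra | split; [intros y Ay; contradiction (HA y) |]].
  intros N; rewrite (psum_ext _ (fun _ => 0)) by (intros; ring).
  rewrite psum_const; lra.
Qed.

Lemma outer_le_translate A m h : outer_le A m -> outer_le (fun x => A (x + h)) m.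
Proof.
  intros HA eps Heps; destruct (HA eps Heps) as [a [b [Hab [Hcov Hsum]]]].
  exists (fun n => a n - h), (fun n => b n - h); repeat split.
  - intros n; specialize (Hab n); lra.
  - intros x Ax; destruct (Hcov _ Ax) as [n Hn]; exists n; lra.
  - intros N; rewrite (sum_eq _ (fun n => b n - a n)) by (intros; ring); apply Hsum.
Qed.

Lemma outer_le_countable_union (B : nat -> R -> Prop) (c : nat -> R) (M : R) :
  (forall n, outer_le (B n) (c n)) -> (forall N, psum c N <= M) ->
  outer_le (fun x => exists n, B n x) M.
Proof.
  intros HB Hc; apply outer_le_psum; intros eps Heps.
  assert (Hcover : forall n, exists ab : (nat -> R) * (nat -> R),
    (forall k, fst ab k <= snd ab k) /\ (forall x, B n x -> exists k, fst ab k < x < snd ab k) /\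
    (forall K, psum (fun k => snd ab k - fst ab k) K <= c n + eps * / 2 ^ S n)).
  { intros n; destruct (proj1 (outer_le_psum _ _) (HB n) (eps * / 2 ^ S n)) as [a [b Hab]].
    - apply Rmult_lt_0_compat, Rinv_0_lt_compat, pow_lt; lra.
    - exists (a, b); exact Hab. }
  destruct (choice _ Hcover) as [ab Hab].
  set (len := fun n k => snd (ab n) k - fst (ab n) k).
  assert (Hlen : forall n k, 0 <= len n k) by (intros n k; pose proof (proj1 (Hab n) k); unfold len; lra).
  exists (fun i => fst (ab (snd (of_nat i))) (fst (of_nat i))),
    (fun i => snd (ab (snd (of_nat i))) (fst (of_nat i))).
  split; [|split].
  - intros i; apply Hab.
  - intros x [n Bx]; destruct (proj1 (proj2 (Hab n)) x Bx) as [k Hk].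
    exists (to_nat (k, n)); rewrite cancel_of_to; exact Hk.
  - intros I; apply Rle_trans with (psum (fun i => len (snd (of_nat i)) (fst (of_nat i))) (to_nat (I, O))).
    { apply psum_le_len; [intros; apply Hlen | apply (to_nat_non_decreasing I O)]. }
    rewrite psum_of_nat.
    apply Rle_trans with (psum (fun n => c n + eps * / 2 ^ S n) I).
    { apply psum_le; intros n _; apply Hab. }
    rewrite psum_add, psum_scal, psum_geom.
    assert (0 < / 2 ^ I) by (apply Rinv_0_lt_compat, pow_lt; lra).
    specialize (Hc I); nra.
Qed.

Lemma outer_le_union_null A Z m : outer_le A m -> null_set Z -> outer_le (fun x => A x \/ Z x) m.
Proof.
  intros HA HZ; pose proof (outer_le_ge0 A m HA).
  apply outer_le_subset with
    (fun x => exists n, match n with O => A x | S O => Z x | _ => False end).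
  { intros x [Ax | Zx]; [exists O | exists (S O)]; assumption. }
  apply outer_le_countable_union with (fun n => match n with O => m | _ => 0 end).
  - intros [|[|n]]; [exact HA | exact HZ | apply null_set_empty; auto].
  - intros N; induction N as [|[|N] IH]; simpl in *; lra.
Qed.

(* Length of the intersection of the intervals [(a, b)] and [(lo, hi)] when [a <= b]. *)
Definition overlap a b lo hi := Rmax (Rmax a lo) (Rmin b hi) - Rmax a lo.

Lemma overlap_ge0 a b lo hi : 0 <= overlap a b lo hi.
Proof. unfold overlap, Rmax, Rmin; repeat destruct Rle_dec; lra. Qed.

Lemma overlap_le a b lo hi : a <= b -> overlap a b lo hi <= b - a.
Proof. intros; unfold overlap, Rmax, Rmin; repeat destruct Rle_dec; lra. Qed.

Lemma overlap_concat a b lo mid hi : a <= b -> lo <= mid <= hi ->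
  overlap a b lo mid + overlap a b mid hi = overlap a b lo hi.
Proof. intros; unfold overlap, Rmax, Rmin; repeat destruct Rle_dec; lra. Qed.

Lemma psum_overlap a b c l K : a <= b -> 0 < l ->
  psum (fun k => overlap a b (c + INR k * l) (c + INR (S k) * l)) K = overlap a b c (c + INR K * l).
Proof.
  intros Hab Hl; induction K as [|K IH]; cbn [psum].
  - simpl; unfold overlap, Rmax, Rmin; repeat destruct Rle_dec; lra.
  - rewrite IH; apply overlap_concat; auto; rewrite S_INR; pose proof (pos_INR K); nra.
Qed.

Lemma exists_uniform_index (P : nat -> nat -> Prop) K :
  (forall k N N', (N <= N')%nat -> P k N -> P k N') ->
  (forall k, (k < K)%nat -> exists N, P k N) -> exists N, forall k, (k < K)%nat -> P k N.
Proof.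
  intros Hmono HP; induction K as [|K IH]; [exists O; intros; lia|].
  destruct IH as [N1 HN1]; [intros; apply HP; lia|].
  destruct (HP K ltac:(lia)) as [N2 HN2]; exists (Nat.max N1 N2); intros k Hk.
  destruct (Nat.eq_dec k K) as [->|]; [apply Hmono with N2 | apply Hmono with N1]; auto; try lia.
  apply HN1; lia.
Qed.

(* Each covering interval of [A] distributes its length among the [K]
   consecutive intervals. *)
Lemma outer_le_consecutive_intervals A m c l K v : 0 < l -> outer_le A m ->
  (forall k, (k < K)%nat -> ~ outer_le (fun x => A x /\ c + INR k * l < x < c + INR (S k) * l) v) ->
  INR K * v <= m.
Proof.
  intros Hl HA Hpieces; apply Rle_plus_epsilon; intros eps Heps.
  destruct (proj1 (outer_le_psum A m) HA eps Heps) as [a [b [Hab [Hcov Hsum]]]].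
  set (piece := fun k n => overlap (a n) (b n) (c + INR k * l) (c + INR (S k) * l)).
  assert (Hexceed : forall k, (k < K)%nat -> exists N, v < psum (piece k) N).
  { intros k Hk; apply NNPP; intros Hnot; apply (Hpieces k Hk), outer_le_psum; intros eps' Heps'.
    exists (fun n => Rmax (a n) (c + INR k * l)),
      (fun n => Rmax (Rmax (a n) (c + INR k * l)) (Rmin (b n) (c + INR (S k) * l))).
    split; [|split].
    - intros n; apply Rmax_l.
    - intros x [Ax Ix]; destruct (Hcov x Ax) as [n Hn]; exists n; split.
      + apply Rmax_lub_lt; lra.
      + eapply Rlt_le_trans; [|apply Rmax_r]; apply Rmin_glb_lt; lra.
    - intros N; assert (psum (piece k) N <= v) by (apply Rnot_lt_le; intros Hlt; apply Hnot; exists N; exact Hlt).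
      unfold piece, overlap in *; lra. }
  destruct (exists_uniform_index (fun k N => v < psum (piece k) N) K) as [N HN]; auto.
  { intros k N N' HNN' Hv; eapply Rlt_le_trans; [exact Hv|].
    apply psum_le_len; auto; intros; apply overlap_ge0. }
  apply Rle_trans with (psum (fun k => psum (piece k) N) K).
  { rewrite <- psum_const; apply psum_le; intros k Hk; left; apply HN; auto. }
  rewrite psum_swap; apply Rle_trans with (psum (fun n => b n - a n) N); [|apply Hsum].
  apply psum_le; intros n _; unfold piece; rewrite psum_overlap; auto; apply overlap_le; auto.
Qed.

Section SparseSet.

Variable E : R -> Prop.
Hypothesis E_sparse : forall c l, 0 < l -> outer_le (fun x => E x /\ c < x < c + l) (l / 2).

Lemma outer_le_sparse_shrink m : outer_le E m -> outer_le E (3 / 4 * m).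
Proof.
  intros HE; destruct (Rle_lt_or_eq_dec _ _ (outer_le_ge0 E m HE)) as [Hm | <-];
    [|rewrite Rmult_0_r; exact HE].
  destruct (proj1 (outer_le_psum E m) HE (m / 2) ltac:(lra)) as [a [b [Hab [Hcov Hsum]]]].
  apply outer_le_subset with (fun x => exists n, E x /\ a n < x < b n).
  { intros x Ex; destruct (Hcov x Ex) as [n Hn]; exists n; auto. }
  apply outer_le_countable_union with (fun n => / 2 * (b n - a n)).
  - intros n; destruct (Rle_lt_or_eq_dec _ _ (Hab n)) as [Hlt | Heq].
    + replace (/ 2 * (b n - a n)) with ((b n - a n) / 2) by field.
      apply outer_le_subset with (fun x => E x /\ a n < x < a n + (b n - a n)).
      { intros x [Ex Hx]; split; [exact Ex | lra]. }
      apply E_sparse; lra.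
    + rewrite Heq, Rminus_diag, Rmult_0_r; apply null_set_empty; intros x [_ Hx]; lra.
  - intros N; rewrite psum_scal; specialize (Hsum N); lra.
Qed.

Lemma null_set_sparse m : outer_le E m -> null_set E.
Proof.
  intros HE; pose proof (outer_le_ge0 E m HE).
  assert (Hiter : forall j, outer_le E ((3 / 4) ^ j * m)).
  { induction j as [|j IH]; [simpl; rewrite Rmult_1_l; exact HE|].
    replace ((3 / 4) ^ S j * m) with (3 / 4 * ((3 / 4) ^ j * m)) by (simpl; ring).
    apply outer_le_sparse_shrink, IH. }
  apply outer_le_of_forall_gt; intros e He.
  destruct (pow_lt_1_zero (3 / 4) ltac:(rewrite Rabs_right; lra) (e / (m + 1))
    ltac:(apply Rdiv_lt_0_compat; lra)) as [j Hj].
  specialize (Hj j (le_n j)); rewrite Rabs_right in Hj by (apply Rle_ge, pow_le; lra).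
  apply outer_le_weaken with ((3 / 4) ^ j * m); [|apply Hiter].
  assert (0 <= (3 / 4) ^ j) by (apply pow_le; lra).
  apply Rmult_lt_compat_r with (r := m + 1) in Hj; [|lra].
  replace (e / (m + 1) * (m + 1)) with e in Hj by (field; lra); nra.
Qed.

End SparseSet.

(* A substitute for the Lebesgue density theorem, with no measurability: if [E]
   filled at most half of every interval, its covers could be shrunk by the
   factor [3/4] indefinitely. *)
Lemma exists_dense_interval E m : outer_le E m -> ~ null_set E ->
  exists c l, 0 < l /\ ~ outer_le (fun x => E x /\ c < x < c + l) (l / 2).
Proof.
  intros HE HnE; apply NNPP; intros Hno; apply HnE, (null_set_sparse E) with m; [|exact HE].
  intros c l Hl; apply NNPP; intros Hc; apply Hno; exists c, l; auto.
Qed.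

(* Translating the dense interval of [E] by [0, l, 2l, ...] up to [2 t] yields
   more than [2 t / l] disjoint intervals, each more than half filled by [A]. *)
Lemma null_of_translates_ae_in A E t : outer_le A t ->
  (forall h, 0 <= h <= 2 * t -> null_set (fun y => E (y - h) /\ ~ A y)) -> null_set E.
Proof.
  intros HA Htrans; apply NNPP; intros HnE.
  pose proof (outer_le_ge0 A t HA) as Ht.
  assert (HE : outer_le E t).
  { apply outer_le_subset with (fun y => A y \/ (E (y - 0) /\ ~ A y)).
    { intros y Ey; destruct (classic (A y)); [left | right; rewrite Rminus_0_r]; auto. }
    apply outer_le_union_null; [exact HA | apply Htrans; lra]. }
  destruct (exists_dense_interval E t HE HnE) as [c [l [Hl Hdense]]].
  destruct (nfloor_ex (2 * t / l)) as [n [Hn1 Hn2]].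
  { apply Rmult_le_pos; [lra | apply Rlt_le, Rinv_0_lt_compat; lra]. }
  assert (Hnl : INR n * l <= 2 * t < (INR n + 1) * l).
  { apply (Rmult_le_compat_r l) in Hn1; apply (Rmult_lt_compat_r l) in Hn2; try lra.
    replace (2 * t / l * l) with (2 * t) in * by (field; lra); lra. }
  assert (Hfilled : INR (S n) * (l / 2) <= t).
  { apply (outer_le_consecutive_intervals A t c l); auto; intros k Hk HAk.
    assert (Hkl : 0 <= INR k * l <= 2 * t).
    { pose proof (pos_INR k); assert (INR k <= INR n) by (apply le_INR; lia); split; nra. }
    apply Hdense, outer_le_subset with (2 := outer_le_translate _ _ (INR k * l)
      (outer_le_union_null _ _ _ HAk (Htrans _ Hkl))).
    intros x [Ex Hx]; cbv beta; rewrite S_INR.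
    destruct (classic (A (x + INR k * l))); [left | right]; split; auto; try lra.
    replace (x + INR k * l - INR k * l) with x by ring; exact Ex. }
  rewrite S_INR in Hfilled; lra.
Qed.

Lemma Rsup_is_lub E : bound E -> (exists x, E x) -> is_lub E (Rsup E).
Proof.
  intros Hb Hne; unfold Rsup; destruct excluded_middle_informative as [H | H].
  - exact (proj2_sig (completeness E (proj1 H) (proj2 H))).
  - contradiction H; auto.
Qed.

Section RinfNonneg.

Variable E : R -> Prop.
Hypothesis E_ge0 : forall x, E x -> 0 <= x.

Lemma Rinf_le x : E x -> Rinf E <= x.
Proof.
  intros Ex; unfold Rinf.
  assert (Hlub : is_lub (fun y => E (- y)) (Rsup (fun y => E (- y)))).
  { apply Rsup_is_lub; [exists 0; intros y Ey; specialize (E_ge0 _ Ey); lra|].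
    exists (- x); rewrite Ropp_involutive; exact Ex. }
  enough (- x <= Rsup (fun y => E (- y))) by lra.
  apply Hlub; rewrite Ropp_involutive; exact Ex.
Qed.

(* [Rsup] of the empty set is [0] too, so no nonemptiness is needed here. *)
Lemma Rinf_ge0 : 0 <= Rinf E.
Proof.
  unfold Rinf, Rsup; destruct excluded_middle_informative as [H | _]; [|lra].
  destruct (proj2_sig (completeness _ (proj1 H) (proj2 H))) as [_ HL].
  enough (proj1_sig (completeness _ (proj1 H) (proj2 H)) <= 0) by lra.
  apply HL; intros y Ey; specialize (E_ge0 _ Ey); lra.
Qed.

Lemma Rinf_lt y : (exists x, E x) -> Rinf E < y -> exists x, E x /\ x < y.
Proof.
  intros [x0 Ex0] Hy; apply NNPP; intros Hno; unfold Rinf in Hy.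
  destruct (Rsup_is_lub (fun z => E (- z))) as [_ Hleast].
  - exists 0; intros z Ez; specialize (E_ge0 _ Ez); lra.
  - exists (- x0); rewrite Ropp_involutive; exact Ex0.
  - enough (Rsup (fun z => E (- z)) <= - y) by lra.
    apply Hleast; intros z Ez; apply Rnot_lt_le; intros Hz; apply Hno; exists (- z); split; [exact Ez | lra].
Qed.

End RinfNonneg.

Definition ess_bounded (f : R -> R) : Prop := exists M, null_set (fun x => M < Rabs (f x)).

Lemma ess_norm_ge0 f : 0 <= ess_norm f.
Proof. apply Rinf_ge0; intros M [HM _]; exact HM. Qed.

Lemma ess_norm_le f M : 0 <= M -> null_set (fun x => M < Rabs (f x)) -> ess_norm f <= M.
Proof. intros HM Hnull; apply Rinf_le; [intros x [Hx _]; exact Hx | split; auto]. Qed.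

Lemma null_gt_ess_norm f W : ess_bounded f -> ess_norm f < W -> null_set (fun x => W < Rabs (f x)).
Proof.
  intros [M HM] HW.
  destruct (Rinf_lt (fun M => 0 <= M /\ null_set (fun x => M < Rabs (f x))) (fun _ H => proj1 H) W)
    as [M' [[_ HM'] HM'W]]; auto.
  - exists (Rabs M); split; [apply Rabs_pos|].
    apply outer_le_subset with (2 := HM); intros x Hx; pose proof (Rle_abs M); lra.
  - apply outer_le_subset with (2 := HM'); intros x Hx; lra.
Qed.

Lemma null_Delta_gt f h M : null_set (fun x => M < Rabs (f x)) ->
  null_set (fun x => 2 * Rabs M < Rabs (Delta h f x)).
Proof.
  intros HM; apply outer_le_subset with (fun x => M < Rabs (f (x + h)) \/ M < Rabs (f x)).
  - intros x Hx; unfold Delta, Rminus in Hx; pose proof (Rle_abs M).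
    destruct (Rlt_le_dec M (Rabs (f x))); [right; exact r | left].
    pose proof (Rabs_triang (f (x + h)) (- f x)); rewrite Rabs_Ropp in *; lra.
  - apply outer_le_union_null; [apply (outer_le_translate (fun x => M < Rabs (f x))) |]; exact HM.
Qed.

Lemma ess_norm_Delta_le_omega f t h : ess_bounded f -> 0 <= h <= t ->
  ess_norm (Delta h f) <= omega f t.
Proof.
  intros [M HM] Hh; apply Rsup_is_lub; [|exists (ess_norm (Delta h f)), h; auto | exists h; auto].
  exists (2 * Rabs M); intros v [h' [_ ->]].
  apply ess_norm_le; [pose proof (Rabs_pos M); lra | apply null_Delta_gt, HM].
Qed.

Lemma rearr_lt f t y : ess_bounded f -> 0 <= t -> rearr f t < y ->
  exists s, 0 <= s /\ outer_le (fun x => s < Rabs (f x)) t /\ s < y.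
Proof.
  intros [M HM] Ht Hy.
  destruct (Rinf_lt (fun s => 0 <= s /\ outer_le (fun x => s < Rabs (f x)) t) (fun _ H => proj1 H) y)
    as [s [[Hs0 Hs] Hsy]]; eauto.
  exists (Rabs M); split; [apply Rabs_pos|].
  apply outer_le_weaken with 0; [exact Ht|].
  apply outer_le_subset with (2 := HM); intros x Hx; pose proof (Rle_abs M); lra.
Qed.

(* Through the midpoint [y - h/2], two increments of step [h/2 <= t] lose at
   most [2 W] in absolute value. *)
Lemma level_set_null f t s W K : outer_le (fun x => s < Rabs (f x)) t -> s + 2 * W < K ->
  (forall h, 0 <= h <= t -> null_set (fun x => W < Rabs (Delta h f x))) ->
  null_set (fun x => K < Rabs (f x)).
Proof.
  intros Hs HK HW; apply (null_of_translates_ae_in _ _ t Hs); intros h Hh.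
  set (Z := fun x => W < Rabs (Delta (h / 2) f x)).
  assert (HZ : null_set Z) by (apply HW; lra).
  apply outer_le_subset with (fun y => Z (y + - h) \/ Z (y + - (h / 2))).
  2: apply outer_le_union_null; apply (outer_le_translate Z); exact HZ.
  intros y [Hy Hys]; apply NNPP; intros Hno; apply Hys.
  assert (H1 : Rabs (f (y - h / 2) - f (y - h)) <= W).
  { apply Rnot_lt_le; intros H; apply Hno; left; unfold Z, Delta.
    replace (y + - h + h / 2) with (y - h / 2) by field; replace (y + - h) with (y - h) by ring; exact H. }
  assert (H2 : Rabs (f y - f (y - h / 2)) <= W).
  { apply Rnot_lt_le; intros H; apply Hno; right; unfold Z, Delta.
    replace (y + - (h / 2) + h / 2) with y by field; replace (y + - (h / 2)) with (y - h / 2) by ring; exact H. }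
  pose proof (Rabs_triang (f y - f (y - h / 2)) (f (y - h / 2) - f (y - h))).
  pose proof (Rabs_triang (f y) (- (f y - f (y - h)))).
  rewrite Rabs_Ropp in *.
  replace (f y - f (y - h / 2) + (f (y - h / 2) - f (y - h))) with (f y - f (y - h)) in * by ring.
  replace (f y + - (f y - f (y - h))) with (f (y - h)) in * by ring.
  lra.
Qed.

Theorem mainTheorem7 (phi : R -> R) (Hinf : Linfty phi) (HS0 : S0 phi) :
  forall t : R, 0 < t -> ess_norm phi <= rearr phi t + 2 * omega phi t.
Proof.
  intros t Ht; destruct Hinf as [_ Hbd].
  apply Rle_plus_epsilon; intros e He.
  destruct (rearr_lt phi t (rearr phi t + e / 3) Hbd) as [s [Hs0 [Hs Hsr]]]; [lra | lra |].
  set (W := omega phi t + e / 6).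
  assert (HW : forall h, 0 <= h <= t -> null_set (fun x => W < Rabs (Delta h phi x))).
  { intros h Hh; apply null_gt_ess_norm.
    - destruct Hbd as [M HM]; exists (2 * Rabs M); apply null_Delta_gt, HM.
    - pose proof (ess_norm_Delta_le_omega phi t h Hbd Hh); unfold W; lra. }
  assert (Homega : 0 <= omega phi t).
  { pose proof (ess_norm_ge0 (Delta 0 phi)); pose proof (ess_norm_Delta_le_omega phi t 0 Hbd); lra. }
  assert (Hrearr : 0 <= rearr phi t) by (apply Rinf_ge0; intros s' [Hs' _]; exact Hs').
  apply ess_norm_le; [lra|].
  apply (level_set_null phi t s W); auto; unfold W; lra.
Qed.
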